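(* Let $m_0\in\mathbb N$ be such that for every $m\ge m_0$, every graph on $m+1$ vertices that has minimum degree at least $\lfloor 2m/3\rfloor$ and a vertex of degree $m$ contains every tree with $m$ edges as a subgraph. Let $k\ge m_0$, let $G$ be a graph on $n$ vertices with $n\ge k+1$, set $a:=n-k$, and let $S$ be the set of vertices of $G$ of degree at most $\frac{2k}{3}+a$, with $b:=|S|$. If some vertex $v$ of $G$ has degree at least $k+b$, then $G$ contains every tree with $k$ edges as a subgraph.
   Context: ''Contains $T$ as a subgraph'' means there is an injective map $V(T)\to V(G)$ sending edges of $T$ to edges of $G$. *)

From mathcomp Require Import all_boot.
Set Implicit Arguments. Unset Strict Implicit. Unset Printing Implicit Defensive.

Definition simple_graph (V : finType) (e : rel V) : Prop :=
  symmetric e /\ irreflexive e.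

Definition deg (V : finType) (e : rel V) (x : V) : nat := #|[set y | e x y]|.

Definition edges (V : finType) (e : rel V) : {set {set V}} :=
  [set E : {set V} | [exists x, exists y, e x y && (E == [set x; y])]].

Definition nedges (V : finType) (e : rel V) : nat := #|edges e|.

Definition connected_graph (V : finType) (e : rel V) : Prop :=
  forall x y : V, connect e x y.

Definition acyclic (V : finType) (e : rel V) : Prop :=
  ~ (exists c : seq V, [/\ 3 <= size c, uniq c & cycle e c]).

Definition is_tree (V : finType) (e : rel V) : Prop :=
  [/\ simple_graph e, 0 < #|V|, connected_graph e & acyclic e].

Definition contains (V : finType) (e : rel V) (T : finType) (eT : rel T) : Prop :=
  exists f : T -> V, injective f /\ forall x y, eT x y -> e (f x) (f y).

Definition contains_all_trees (V : finType) (e : rel V) (k : nat) : Prop :=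
  forall (T : finType) (eT : rel T), is_tree eT -> nedges eT = k -> contains e eT.

From mathcomp Require Import all_boot zify.

(* The neighbourhood N of a vertex v of degree at least k + |S| contains k
   vertices outside S. Together with v they induce a graph on k + 1 vertices in
   which v has degree k, and every other vertex loses at most the n - k - 1
   vertices outside, so keeps degree more than 2k/3 because it was not in S.
   The hypothesis on m0 then embeds every tree with k edges into this induced
   subgraph, hence into G. *)

Set Implicit Arguments.
Unset Strict Implicit.
Unset Printing Implicit Defensive.

Lemma exists_subset_card (T : finType) (A : {set T}) k : k <= #|A| ->
  exists2 B : {set T}, B \subset A & #|B| = k.
Proof.
case/card_geqP=> s [s_uniq <- sA]; exists [set:: s].
  by apply/subsetP=> x; rewrite inE => /sA.
by rewrite cardsE; apply/card_uniqP.
Qed.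

Section InducedSubgraph.

Variables (V : finType) (e : rel V) (W : {set V}).

Definition induced : rel {x | x \in W} := fun x y => e (val x) (val y).

Lemma induced_simple : simple_graph e -> simple_graph induced.
Proof. by case=> e_sym e_irr; split=> [x y | x]; rewrite /induced (e_sym, e_irr). Qed.

Lemma card_induced : #|{: {x | x \in W}}| = #|W|.
Proof. by rewrite card_sig; apply: eq_card. Qed.

Lemma deg_induced (w : {x | x \in W}) :
  deg induced w = #|W :&: [set y | e (val w) y]|.
Proof.
rewrite /deg -(card_imset _ val_inj); apply: eq_card => x; rewrite !inE.
apply/imsetP/andP => [[y] | [xW wx]]; first by rewrite inE => wy ->; split=> //; exact: valP.
by exists (exist _ x xW); rewrite ?inE.
Qed.

Lemma deg_le_deg_induced (w : {x | x \in W}) :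
  deg e (val w) <= deg induced w + #|~: W|.
Proof.
rewrite deg_induced; apply: leq_trans (leq_card_setU _ _).
apply: subset_leq_card; apply/subsetP=> y; rewrite !inE => ->.
by rewrite andbT orbN.
Qed.

Lemma contains_all_trees_induced k :
  contains_all_trees induced k -> contains_all_trees e k.
Proof.
move=> treesW T eT T_tree T_size; have [f [f_inj f_edge]] := treesW T eT T_tree T_size.
by exists (val \o f); split=> [|x y /f_edge //]; apply: inj_comp f_inj; exact: val_inj.
Qed.

End InducedSubgraph.

Lemma neighbours_apex (V : finType) (e : rel V) (v : V) (B : {set V}) :
  irreflexive e -> B \subset [set y | e v y] ->
  (v |: B) :&: [set y | e v y] = B.
Proof.
move=> e_irr /subsetP BN; apply/setP=> y; rewrite !inE.
case: eqP => [-> | _] /=; first by rewrite e_irr; apply/esym/negbTE/negP => /BN; rewrite inE e_irr.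
by apply/andP/idP => [[] // | yB]; split=> //; move/BN: yB; rewrite inE.
Qed.

Theorem mainTheorem5 (m0 : nat)
  (Hm0 : forall m : nat, m0 <= m ->
     forall (W : finType) (eW : rel W), simple_graph eW -> #|W| = m.+1 ->
       (forall w : W, (2 * m) %/ 3 <= deg eW w) ->
       (exists w : W, deg eW w = m) ->
       contains_all_trees eW m)
  (k : nat) (Hk : m0 <= k)
  (V : finType) (e : rel V) (He : simple_graph e)
  (n : nat) (Hn : #|V| = n) (Hnk : k + 1 <= n) :
  let a := n - k in
  let S := [set x : V | 3 * deg e x <= 2 * k + 3 * a] in
  let b := #|S| in
  (exists v : V, k + b <= deg e v) ->
  contains_all_trees e k.
Proof.
move=> a S b [v deg_v]; have [_ e_irr] := He.
set N := [set y | e v y].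
have NS_k : k <= #|N :\: S|.
  have : #|N :&: S| <= b by apply/subset_leq_card/subsetIr.
  by move: deg_v; rewrite cardsD /deg -/N; lia.
have [B BNS cardB] := exists_subset_card NS_k.
have BN : B \subset N := subset_trans BNS (subsetDl N S).
have vB : v \notin B by apply/negP => /(subsetP BN); rewrite inE e_irr.
set W := v |: B.
have outside_W : #|~: W| = n - k.+1 by have := cardsC W; rewrite cardsU1 vB cardB Hn; lia.
apply: (@contains_all_trees_induced _ _ W); apply: Hm0 => //.
- exact: induced_simple.
- by rewrite card_induced cardsU1 vB cardB.
- move=> w; case/setU1P: (valP w) => [w_v | wB].
    by rewrite deg_induced w_v neighbours_apex // cardB; lia.
  have /setDP [_ wS] := subsetP BNS _ wB; move: wS; rewrite inE -ltnNge.
  (* the two occurrences of [val w] carry different subType instances *)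
  by have := deg_le_deg_induced e w; rewrite outside_W /a; move: (deg e _); lia.
- by exists (exist _ v (setU11 v B)); rewrite deg_induced neighbours_apex.
Qed.
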